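(* Let $G$ be a brick and let $X,Y\subseteq V(G)$ be such that $\overline{X}$ and $\overline{Y}$ are nonempty and disjoint, $G/X$ and $G/Y$ are bricks, and the graph $H=(G/(\overline{X}\to\overline{x}))/(\overline{Y}\to\overline{y})$ is a bipartite matching covered graph. Then every edge of $H$ incident with $\overline{x}$ is removable in $H$.
   Context: Graphs are finite and loopless; multiple edges allowed. For $X\subseteq V(G)$, $\overline{X}=V(G)\setminus X$ and $\partial(X)$ is the set of edges with exactly one end in $X$. $G/(X\to x)$ (or $G/X$) is obtained by identifying all vertices of $X$ into a new vertex $x$ and deleting edges with both ends in $X$. A graph is matching covered if it is connected, has at least two vertices, and every edge lies in a perfect matching. A cut $\partial(X)$ is tight if every perfect matching contains exactly one of its edges, trivial if $|X|=1$ or $|\overline{X}|=1$. A brick is a nonbipartite matching covered graph all of whose tight cuts are trivial. An edge $e$ of a matching covered graph $H$ is removable if $H-e$ is matching covered. *)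

From mathcomp Require Import ssreflect ssrfun ssrbool eqtype ssrnat seq choice.
From mathcomp Require Import fintype finset fingraph.
Set Implicit Arguments. Unset Strict Implicit. Unset Printing Implicit Defensive.

(* A finite multigraph: a finite vertex type, a finite edge type, and the two
   ends of each edge (orientation is irrelevant everywhere below). *)
Record mgraph := MGraph {
  gV : finType;
  gE : finType;
  esrc : gE -> gV;
  etgt : gE -> gV }.

Arguments esrc {G} e : rename.
Arguments etgt {G} e : rename.

Definition loopless (G : mgraph) : Prop := forall e : gE G, esrc e != etgt e.

Definition incident (G : mgraph) (v : gV G) (e : gE G) : bool :=
  (esrc e == v) || (etgt e == v).

Definition perfect_matching (G : mgraph) (M : {set gE G}) : Prop :=
  forall v : gV G, #|[set e in M | incident v e]| = 1.

Definition adj (G : mgraph) : rel (gV G) :=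
  fun v w => [exists e : gE G,
     ((esrc e == v) && (etgt e == w)) || ((esrc e == w) && (etgt e == v))].

Definition connected (G : mgraph) : Prop :=
  forall v w : gV G, connect (@adj G) v w.

Definition cut (G : mgraph) (X : {set gV G}) : {set gE G} :=
  [set e : gE G | (esrc e \in X) != (etgt e \in X)].

(* matching covered (graphs are loopless by convention) *)
Definition matching_covered (G : mgraph) : Prop :=
  [/\ loopless G, connected G, 2 <= #|gV G| &
      forall e : gE G, exists M : {set gE G}, perfect_matching M /\ e \in M].

Definition bipartite (G : mgraph) : Prop :=
  exists A : {set gV G}, forall e : gE G, (esrc e \in A) != (etgt e \in A).

Definition tight_cut (G : mgraph) (X : {set gV G}) : Prop :=
  forall M : {set gE G}, perfect_matching M -> #|M :&: cut X| = 1.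

Definition trivial_cut (G : mgraph) (X : {set gV G}) : Prop :=
  #|X| = 1 \/ #|~: X| = 1.

Definition brick (G : mgraph) : Prop :=
  [/\ matching_covered G, ~ bipartite G &
      forall X : {set gV G}, tight_cut X -> trivial_cut X].

Definition del_edge (G : mgraph) (e : gE G) : mgraph :=
  @MGraph (gV G) {f : gE G | f != e}
     (fun f => esrc (val f)) (fun f => etgt (val f)).

Definition removable (G : mgraph) (e : gE G) : Prop :=
  matching_covered (del_edge e).

(* G/(X -> x): vertices are [None] (the new vertex x) and the vertices outside
   X; edges are those with not both ends in X. *)
Definition cvert (G : mgraph) (X : {set gV G}) : finType :=
  option {v : gV G | v \notin X}.

Definition cmap (G : mgraph) (X : {set gV G}) (v : gV G) : cvert X :=
  insub v.

Definition contract (G : mgraph) (X : {set gV G}) : mgraph :=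
  @MGraph (cvert X)
     {e : gE G | ~~ ((esrc e \in X) && (etgt e \in X))}
     (fun f => cmap X (esrc (val f))) (fun f => cmap X (etgt (val f))).

Definition cvtx (G : mgraph) (X : {set gV G}) : gV (contract X) := None.

From mathcomp Require Import ssreflect ssrfun ssrbool eqtype ssrnat seq choice.
From mathcomp Require Import fintype finset fingraph bigop.
From mathcomp Require Import zify.
Set Implicit Arguments. Unset Strict Implicit. Unset Printing Implicit Defensive.

(* Let [A] be the colour class of [H] containing [xbar].  If an edge [e] at [xbar]
   were not removable, some other edge [f] would lie only in perfect matchings
   through [e], and Hall's theorem (applied to [H - e] with [f] fixed) produces
   [S \subset A] containing [xbar] and [T] outside [A] with [#|S| = #|T|] such that
   every edge other than [e] leaving [S] ends in [T].  A perfect matching [M] of [G]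
   induces in [H] an edge set of degree one everywhere except at [xbar] and [ybar],
   with degree [#|M :&: cut (~: X)|] at [xbar].  Degree counting over [A], [S] and
   [T] bounds this degree by [2] unless [ybar \in T]; in that case the vertices of
   [G] mapped outside [S :|: T], together with the end of [e] in [~: X], span a
   nontrivial tight cut of [G].  Both contradict [G] being a brick: [~: X] is odd
   and nontrivial, so some perfect matching meets its cut in at least three edges. *)

Lemma sum_nat_card (T : finType) (A : {pred T}) (Q : pred T) :
  \sum_(i in A) Q i = #|[set i in A | Q i]|.
Proof. by rewrite -sum1dep_card big_mkcondr /=; apply: eq_bigr => i _; case: (Q i). Qed.

Lemma cards_setI1 (T : finType) (A : {set T}) a : #|A :&: [set a]| = (a \in A).
Proof.
case: (boolP (a \in A)) => aA; first by rewrite (setIidPr _) ?cards1 // sub1set.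
apply/eqP; rewrite cards_eq0; apply/eqP/setP => b; rewrite !inE.
by case: eqP => [->|]; rewrite ?(negbTE aA) ?andbF.
Qed.

Section Incidence.
Variable G : mgraph.
Implicit Types (F M : {set gE G}) (P S : {set gV G}) (u v w : gV G) (h : gE G).

Definition deg F v := #|[set h in F | incident v h]|.

Definition inside P := [set h : gE G | (esrc h \in P) && (etgt h \in P)].

Definition other v h := if esrc h == v then etgt h else esrc h.

Lemma incident_ends v h : incident v h ->
  (esrc h = v /\ etgt h = other v h) \/ (etgt h = v /\ esrc h = other v h).
Proof.
rewrite /incident /other; case: (esrc h =P v) => [->|_] /=; first by left.
by move/eqP => ->; right.
Qed.

Lemma incident_other v h : incident v h -> incident (other v h) h.
Proof. by case/incident_ends => [[_ <-]|[_ <-]]; rewrite /incident eqxx ?orbT. Qed.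

Lemma incident_otherP v w h : incident v h -> incident w h -> w = v \/ w = other v h.
Proof.
case/incident_ends => [[s t]|[t s]]; rewrite /incident s t => /orP [] /eqP <-;
  by [left|right|right|left].
Qed.

Lemma adj_sym : symmetric (@adj G).
Proof. by move=> v w; apply/existsP/existsP => [] [h]; exists h; rewrite orbC. Qed.

Lemma adjP v w : reflect (exists2 h, incident v h & other v h = w) (adj v w).
Proof.
apply: (iffP existsP) => [[h /orP [] /andP [/eqP s /eqP t]]|[h]]; first 2 last.
- by case/incident_ends => [] [s t] <-; exists h; rewrite s t !eqxx ?orbT.
- by exists h; rewrite /incident /other s t eqxx.
exists h; first by rewrite /incident t eqxx orbT.
by rewrite /other s t; case: eqP.
Qed.

Lemma other_other v h : incident v h -> other (other v h) h = v.
Proof.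
rewrite /incident /other; case: (esrc h =P v) => [->|_] /=; first by case: eqP.
by move/eqP => ->; rewrite eqxx.
Qed.

Lemma cut_other P v h : incident v h -> (h \in cut P) = ((v \in P) != (other v h \in P)).
Proof. by rewrite inE; case/incident_ends => [] [-> ->] //; rewrite eq_sym. Qed.

Lemma inside_other P v h : incident v h -> (h \in inside P) = (v \in P) && (other v h \in P).
Proof. by rewrite inE; case/incident_ends => [] [-> ->] //; rewrite andbC. Qed.

Lemma cut_end P h : h \in cut P -> exists v, [/\ incident v h, v \in P & other v h \notin P].
Proof.
rewrite inE => cutP; case: (boolP (esrc h \in P)) => sP.
  by exists (esrc h); rewrite /incident /other eqxx; move: cutP; rewrite sP; case: (_ \in P).
have tP : etgt h \in P by move: cutP; rewrite (negbTE sP); case: (_ \in P).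
exists (etgt h); split => //; first by rewrite /incident eqxx orbT.
by rewrite /other; case: eqP => [E|_] //; rewrite E tP in sP.
Qed.

Lemma cutC P : cut (~: P) = cut P.
Proof. by apply/setP => h; rewrite !inE; case: (_ \in P); case: (_ \in P). Qed.

Lemma sum_incident P h : loopless G ->
  \sum_(v in P) incident v h = 2 * (h \in inside P) + (h \in cut P).
Proof.
move=> ll; rewrite (eq_bigr (fun v => (esrc h == v) + (etgt h == v))); last first.
  move=> v _; have := ll h; rewrite /incident.
  by case: (esrc h =P v) => [<-|_]; case: (etgt h =P _) => [->|_] //=; rewrite eqxx.
have sum_eq (z : gV G) : \sum_(v in P) (z == v) = (z \in P).
  case: (boolP (z \in P)) => zP.
    by rewrite (bigD1 z) //= eqxx big1 // => v /andP [_ /negbTE]; rewrite eq_sym => ->.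
  by rewrite big1 // => v vP; case: eqP => // zv; rewrite zv vP in zP.
rewrite big_split /= !sum_eq !inE; by case: (_ \in P); case: (_ \in P).
Qed.

Lemma sum_deg F P : loopless G ->
  \sum_(v in P) deg F v = 2 * #|F :&: inside P| + #|F :&: cut P|.
Proof.
move=> ll; rewrite (eq_bigr (fun v => \sum_(h in F) incident v h)) => [|v _]; last first.
  by rewrite sum_nat_card.
rewrite exchange_big /= (eq_bigr _ (fun h _ => sum_incident P h ll)) big_split /= -big_distrr /=.
by rewrite !sum_nat_card; congr (2 * _ + _); apply: eq_card => h; rewrite !inE.
Qed.

Lemma connected_boundary P v w : connected G -> v \in P -> w \notin P ->
  exists x y, [/\ adj x y, x \in P & y \notin P].
Proof.
move=> conn vP wP.
suff /existsP [[x y] /and3P [xy xP yP]] : [exists p, [&& adj p.1 p.2, p.1 \in P & p.2 \notin P]].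
  by exists x, y.
apply: contraT => /existsPn noedge.
have clP : closed (@adj G) P.
  apply: (intro_closed (sym_connect_sym adj_sym)) => x y xy xP; apply/negPn/negP => yP.
  by have := noedge (x, y); rewrite xy xP yP.
by move: wP; rewrite -(closed_connect clP (conn v w)) vP.
Qed.

Lemma perfect_matchingP M :
  reflect (perfect_matching M) [forall v, #|[set h in M | incident v h]| == 1].
Proof. by apply: (iffP forallP) => pmM v; apply/eqP. Qed.

Lemma deg_cut1 F v : loopless G -> deg F v = #|F :&: cut [set v]|.
Proof.
move=> ll; have := sum_deg F [set v] ll; rewrite big_set1 => ->.
suff -> : F :&: inside [set v] = set0 by rewrite cards0.
apply/setP => h; rewrite !inE; apply/negP => /and3P [_ /eqP s /eqP t].
by have := ll h; rewrite s t eqxx.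
Qed.

Section PerfectMatching.
Variable M : {set gE G}.
Hypothesis pmM : perfect_matching M.

Definition mate v := if [pick h in M | incident v h] is Some h then other v h else v.

Lemma mate_edge v h : h \in M -> incident v h -> mate v = other v h.
Proof.
have /eqP /cards1P [h0 E] := pmM v.
have h0P h' : (h' \in M) && incident v h' = (h' == h0) by rewrite -in_set1 -E inE.
move=> hM vh; rewrite /mate; case: pickP => [h'|/(_ h)]; last by rewrite hM vh.
by rewrite h0P => /eqP ->; have := h0P h; rewrite hM vh => /esym /eqP ->.
Qed.

Lemma mateP v : exists2 h, h \in M & incident v h /\ mate v = other v h.
Proof.
have /eqP /cards1P [h E] := pmM v; have : h \in [set h in M | incident v h] by rewrite E set11.
by rewrite inE => /andP [hM vh]; exists h => //; split => //; apply: mate_edge.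
Qed.

Lemma mateK : involutive mate.
Proof.
move=> v; have [h hM [vh ->]] := mateP v.
by rewrite (mate_edge hM (incident_other vh)) other_other.
Qed.

Lemma adj_mate v : adj v (mate v).
Proof. by have [h hM [vh ->]] := mateP v; apply/adjP; exists h. Qed.

Lemma card_pm P : loopless G -> #|P| = 2 * #|M :&: inside P| + #|M :&: cut P|.
Proof. by move=> ll; rewrite -sum_deg // -sum1_card; apply: eq_bigr => v _; rewrite /deg pmM. Qed.

Lemma odd_cut P : loopless G -> odd #|M :&: cut P| = odd #|P|.
Proof. by move=> ll; rewrite (card_pm P ll) oddD mul2n odd_double. Qed.

End PerfectMatching.

Definition bipartition P := forall h, (esrc h \in P) != (etgt h \in P).

Definition nbhd S := [set w | [exists v in S, adj v w]].

Section Bipartition.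
Variable A : {set gV G}.
Hypothesis bipA : bipartition A.

Lemma bipartitionC : bipartition (~: A).
Proof. by move=> h; rewrite !inE; have := bipA h; do 2 case: (_ \in A). Qed.

Lemma bipartition_other v h : incident v h -> (other v h \in A) = (v \notin A).
Proof.
by move=> vh; have := bipA h; case: (incident_ends vh) => [] [<- <-]; do 2 case: (_ \in A).
Qed.

Lemma bipartition_adj v w : adj v w -> (w \in A) = (v \notin A).
Proof. by case/adjP => h vh <-; apply: bipartition_other. Qed.

Lemma sum_deg_bipartition F : loopless G -> \sum_(v in A) deg F v = #|F|.
Proof.
move=> ll; rewrite sum_deg //.
have -> : F :&: inside A = set0.
  by apply/setP => h; rewrite !inE; have := bipA h; do 2 case: (_ \in A); rewrite ?andbF.
have -> : F :&: cut A = F by apply/setP => h; rewrite !inE bipA andbT.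
by rewrite cards0.
Qed.

Lemma card_bipartition M : loopless G -> perfect_matching M -> #|A| = #|M|.
Proof.
move=> ll pmM; rewrite -sum_deg_bipartition // -sum1_card.
by apply: eq_bigr => v _; rewrite /deg pmM.
Qed.

Lemma sum_deg_side F P : loopless G -> P \subset A ->
  \sum_(v in P) deg F v = #|F :&: cut P|.
Proof.
move=> ll sPA; rewrite sum_deg //; suff -> : F :&: inside P = set0 by rewrite cards0.
apply/setP => h; rewrite !inE; apply/negP => /and3P [_ /(subsetP sPA) sA /(subsetP sPA) tA].
by have := bipA h; rewrite sA tA.
Qed.

End Bipartition.

Lemma bipartition_balanced A M : bipartition A -> loopless G -> perfect_matching M ->
  #|A| = #|~: A|.
Proof.
move=> bipA ll pmM.
by rewrite (card_bipartition bipA ll pmM) (card_bipartition (bipartitionC bipA) ll pmM).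
Qed.

Lemma matching_covered_surplus (A S : {set gV G}) : matching_covered G -> bipartition A ->
  S \subset A -> S != set0 -> S != A -> #|S| < #|nbhd S|.
Proof.
move=> [ll conn _ cov] bipA sSA /set0Pn [s sS] neSA.
have /subsetPn [a aA aS] : ~~ (A \subset S) by apply: contra neSA => sAS; rewrite eqEsubset sSA.
have nbhdA w : w \in nbhd S -> w \notin A.
  by rewrite inE => /exists_inP [v vS /(bipartition_adj bipA) ->]; rewrite (subsetP sSA v vS).
have sSN : s \in S :|: nbhd S by rewrite inE sS.
have aSN : a \notin S :|: nbhd S by rewrite inE negb_or aS; apply: contraL aA; apply: nbhdA.
have [x [y [xy]]] := connected_boundary conn sSN aSN.
rewrite !in_setU negb_or => xSN /andP [yS yN].
have xS : x \notin S by apply: contra yN => xS; rewrite inE; apply/exists_inP; exists x.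
have {xSN} xN : x \in nbhd S by move: xSN; rewrite (negbTE xS).
have [h xh hy] := adjP _ _ xy; have [M [pmM hM]] := cov h.
have mate_x : mate M x = y by rewrite (mate_edge pmM hM xh).
have mate_S : mate M @: S \subset nbhd S :\ x.
  apply/subsetP => _ /imsetP [v vS ->]; rewrite !inE; apply/andP; split.
    by apply: contra yS => /eqP mv; rewrite -mate_x -mv (mateK pmM).
  by apply/exists_inP; exists v; last exact: adj_mate.
have := subset_leq_card mate_S; rewrite card_imset; last exact: can_inj (mateK pmM).
by rewrite [#|nbhd S|](cardsD1 x) xN.
Qed.

End Incidence.

Section Hall.
Variables (T U : finType) (u0 : U).
Implicit Types (r : T -> U -> bool) (A S : {set T}).

Definition nbhd_rel r S := [set u | [exists t in S, r t u]].

Definition hall_condition r A := forall S, S \subset A -> #|S| <= #|nbhd_rel r S|.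

Definition sdr r A :=
  exists2 phi : T -> U, {in A &, injective phi} & {in A, forall t, r t (phi t)}.

Lemma hall_conditionS r A (B : {set T}) : B \subset A -> hall_condition r A -> hall_condition r B.
Proof. by move=> sBA hallA S sSB; apply/hallA/(subset_trans sSB). Qed.

Section HallStep.
Variable A : {set T}.
Hypothesis IH : forall A' r, #|A'| < #|A| -> hall_condition r A' -> sdr r A'.

(* A critical subset [S0] is matched into its own neighbourhood, and the rest
   of [A] into the complement of that neighbourhood. *)
Lemma hall_critical r S0 : hall_condition r A ->
  S0 \subset A -> S0 != set0 -> S0 != A -> #|nbhd_rel r S0| <= #|S0| -> sdr r A.
Proof.
move=> hallA sS0A /set0Pn [s0 s0S] neS0A leN.
have [phi1 inj1 r1] : sdr r S0.
  by apply: IH (hall_conditionS sS0A hallA); rewrite proper_card // properEneq neS0A.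
pose r2 t u := r t u && (u \notin nbhd_rel r S0).
have [phi2 inj2 r2P] : sdr r2 (A :\: S0).
  apply: IH.
    have : 0 < #|S0| by rewrite card_gt0; apply/set0Pn; exists s0.
    by rewrite cardsDS //; have := subset_leq_card sS0A; lia.
  move=> S; rewrite subsetD => /andP [sSA disS].
  have sub : nbhd_rel r (S :|: S0) \subset nbhd_rel r2 S :|: nbhd_rel r S0.
    apply/subsetP => u; rewrite !inE => /exists_inP [t]; rewrite inE => /orP [tS|tS0] rtu.
      rewrite orbC; case: exists_inP => [//|nN] /=.
      by apply/exists_inP; exists t; rewrite // /r2 rtu inE; apply/negP => /exists_inP.
    by apply/orP; right; apply/exists_inP; exists t.
  have := hallA (S :|: S0); rewrite subUset sSA sS0A => /(_ isT).
  rewrite cardsU (disjoint_setI0 disS) cards0 subn0.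
  by have := subset_leq_card sub; have := (leq_card_setU (nbhd_rel r2 S) (nbhd_rel r S0)).1; lia.
have inN t : t \in S0 -> phi1 t \in nbhd_rel r S0.
  by move=> tS0; rewrite inE; apply/exists_inP; exists t; last exact: r1.
have r2D t : t \in A -> t \in S0 = false -> r t (phi2 t) && (phi2 t \notin nbhd_rel r S0).
  by move=> tA tS0; apply: r2P; rewrite inE tS0 tA.
exists (fun t => if t \in S0 then phi1 t else phi2 t) => [x y xA yA|t tA] /=; last first.
  by case: ifP => tS0; [apply: r1|case/andP: (r2D t tA tS0)].
case: ifP => xS0; case: ifP => yS0; first exact: inj1.
- by move=> E; case/andP: (r2D y yA yS0); rewrite -E inN.
- by move=> E; case/andP: (r2D x xA xS0); rewrite E inN.
- by apply: inj2; rewrite inE ?xS0 ?yS0.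
Qed.

(* Without a critical subset, any edge [a u] can be used: removing [a] and
   [u] keeps Hall's condition. *)
Lemma hall_slack r : hall_condition r A ->
  (forall S0, S0 \subset A -> S0 != set0 -> S0 != A -> #|S0| < #|nbhd_rel r S0|) ->
  sdr r A.
Proof.
move=> hallA slack; have [->|[a aA]] := set_0Vmem A.
  by exists (fun=> u0) => [x|x]; rewrite inE.
have : 0 < #|nbhd_rel r [set a]| by have := hallA [set a]; rewrite sub1set aA cards1; apply.
rewrite card_gt0 => /set0Pn [u]; rewrite inE => /exists_inP [_ /set1P -> rau].
pose r' t v := r t v && (v != u).
have [phi' inj' r'P] : sdr r' (A :\ a).
  apply: IH; first by rewrite (cardsD1 a A) aA.
  move=> S; rewrite subsetD1 => /andP [sSA aS].
  have [->|nzS] := eqVneq S set0; first by rewrite cards0.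
  have neSA : S != A by apply: contraNneq aS => ->.
  have sub : nbhd_rel r S \subset nbhd_rel r' S :|: [set u].
    apply/subsetP => v; rewrite !inE => /exists_inP [t tS rtv].
    case: (eqVneq v u) => [->|nvu]; rewrite ?eqxx ?orbT // orbF.
    by apply/exists_inP; exists t; rewrite // /r' rtv.
  have := slack S sSA nzS neSA; have := subset_leq_card sub.
  by have := (leq_card_setU (nbhd_rel r' S) [set u]).1; rewrite cards1; lia.
have r'D t : t \in A -> t != a -> r t (phi' t) && (phi' t != u).
  by move=> tA ta; apply: r'P; rewrite !inE ta.
exists (fun t => if t == a then u else phi' t) => [x y xA yA|t tA] /=; last first.
  by case: eqP => [->//|/eqP ta]; case/andP: (r'D t tA ta).
case: eqP => [->|/eqP xa]; case: eqP => [->|/eqP ya] //.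
- by move=> E; case/andP: (r'D y yA ya); rewrite E eqxx.
- by move=> E; case/andP: (r'D x xA xa); rewrite E eqxx.
- by apply: inj'; rewrite !inE ?xa ?ya.
Qed.

End HallStep.

Theorem hall r A : hall_condition r A -> sdr r A.
Proof.
elim: {A}_.+1 {-2}A (ltnSn #|A|) r => // n IHn A leAn r hallA.
have IH A' r' : #|A'| < #|A| -> hall_condition r' A' -> sdr r' A'.
  by move=> ltA'; apply: IHn; lia.
case: (boolP [exists S0 : {set T}, [&& S0 \subset A, S0 != set0, S0 != A &
                                     #|nbhd_rel r S0| <= #|S0|]]).
  case/existsP => S0 /and4P [sS0A nzS0 neS0A leN].
  exact: (hall_critical IH hallA sS0A nzS0 neS0A leN).
move/existsPn => noncritical; apply: (hall_slack IH hallA) => S0 sS0A nzS0 neS0A.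
by have := noncritical S0; rewrite sS0A nzS0 neS0A /= -ltnNge.
Qed.

End Hall.

Section DeleteEdge.
Variables (G : mgraph) (e : gE G).
Let D := del_edge e.

Lemma adj_del_edge (g : gE G) : g != e -> @adj D (esrc g) (etgt g).
Proof. by move=> ge; apply/existsP; exists (Sub g ge : gE D); rewrite !eqxx. Qed.

Lemma perfect_matching_del_edge (N : {set gE G}) : perfect_matching N -> e \notin N ->
  perfect_matching [set g : gE D | val g \in N].
Proof.
move=> pmN eN v; rewrite -(pmN v) -(card_imset _ val_inj); apply: eq_card => g.
rewrite !inE; apply/imsetP/andP => [[g']|[gN vg]]; first by rewrite !inE => /andP [g'N vg'] ->.
have ge : g != e by apply: contraNneq eN => <-.
by exists (Sub g ge : gE D); rewrite // !inE SubK gN.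
Qed.

(* Otherwise [e] is the only edge leaving the component [C] of [esrc e] in
   [G - e], and the parity of [#|M :&: cut C|], which is that of [#|C|], would
   tell whether [e \in M]. *)
Lemma connected_del_edge : matching_covered G ->
  (exists2 N, perfect_matching N & e \notin N) -> connected D.
Proof.
move=> [ll conn _ cov] [N pmN eN].
pose C : {set gV G} := [set w | connect (@adj D) (esrc e) w].
have sym_adjD : connect_sym (@adj D) := sym_connect_sym (@adj_sym D).
have adjC g : g != e -> (esrc g \in C) = (etgt g \in C).
  move=> ge; rewrite !inE; apply: same_connect_r => //; exact: connect1 (adj_del_edge ge).
have srcC : esrc e \in C by rewrite inE connect0.
have tgtC : etgt e \in C.
  apply: contraT => tgtC; have [N0 [pmN0 eN0]] := cov e.
  have cutC : cut C = [set e].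
    apply/setP => g; rewrite in_set1 [in LHS]inE.
    by case: (eqVneq g e) => [->|ge]; rewrite ?srcC ?(negbTE tgtC) ?adjC ?eqxx.
  have := odd_cut pmN C ll; rewrite -(odd_cut pmN0 C ll) cutC.
  by rewrite !cards_setI1 eN0 (negbTE eN).
have clC : closed (@adj G) C.
  apply: (intro_closed (sym_connect_sym (@adj_sym G))) => x y /adjP [g xg <-] xC.
  case: (eqVneq g e) => [->|ge]; first by rewrite /other; case: ifP.
  by case/incident_ends: xg xC => [] [<- <-]; rewrite adjC.
move=> v w; have Cv := closed_connect clC (conn (esrc e) v).
have Cw := closed_connect clC (conn (esrc e) w).
rewrite srcC !inE in Cv Cw; rewrite sym_adjD in Cv.
exact: connect_trans (esym Cv) (esym Cw).
Qed.

Lemma removable_of_avoiding : matching_covered G -> (exists f, f != e) ->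
  (forall f, f != e -> exists N, [/\ perfect_matching N, f \in N & e \notin N]) ->
  removable e.
Proof.
move=> mcG [f fe] avoid; have [ll _ two _] := mcG.
split => //; first by move=> g; apply: ll.
  by have [N [pmN _ eN]] := avoid f fe; apply: connected_del_edge => //; exists N.
move=> g; have [N [pmN gN eN]] := avoid (val g) (valP g).
exists [set g : gE D | val g \in N]; rewrite inE gN.
by split => //; apply: perfect_matching_del_edge.
Qed.

End DeleteEdge.

Lemma perfect_matching_of_cover (G : mgraph) (N : {set gE G}) : loopless G ->
  (forall v, 0 < deg N v) -> 2 * #|N| <= #|gV G| -> perfect_matching N.
Proof.
move=> ll cover small v; apply/eqP; rewrite eqn_leq -/(deg N v) cover andbT.
have sumN : \sum_(v in setT) deg N v = 2 * #|N|.
  rewrite sum_deg //; have -> : N :&: cut setT = set0 by apply/setP => g; rewrite !inE andbF.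
  have -> : N :&: inside setT = N by apply/setP => g; rewrite !inE !andbT.
  by rewrite cards0 addn0.
have := leq_trans (eq_leq sumN) small; rewrite -cardsT (bigD1 v) //= (cardsD1 v) inE.
have : \sum_(w in setT | w != v) 1 <= \sum_(w in setT | w != v) deg N w.
  by apply: leq_sum => w _; apply: cover.
have -> : \sum_(w in setT | w != v) 1 = #|setT :\ v|.
  by rewrite -sum1_card; apply: eq_bigl => w; rewrite !inE andbT.
lia.
Qed.

Section Obstruction.
Variables (H : mgraph) (A : {set gV H}) (e : gE H) (x : gV H).
Hypotheses (mcH : matching_covered H) (bipA : bipartition A) (xA : x \in A) (xe : incident x e).

Let llH : loopless H. Proof. by case: mcH. Qed.

Definition obstruction (S T : {set gV H}) :=
  [/\ x \in S, S \subset A, T \subset ~: A :\ other x e, #|S| = #|T| &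
      forall g, g != e -> forall s, s \in S -> incident s g -> other s g \in T].

Lemma obstruction_other S T : obstruction S T -> other x e \notin S :|: T.
Proof.
case=> _ SA TA _ _; have beA : other x e \notin A by rewrite (bipartition_other bipA xe) xA.
rewrite in_setU negb_or (contra (subsetP SA _) beA).
by apply/negP => /(subsetP TA); rewrite !inE eqxx.
Qed.

Section Dependent.
Variable f : gE H.
Hypothesis fe : f != e.

Let af := if esrc f \in A then esrc f else etgt f.
Let tf := other af f.

Let af_f : incident af f.
Proof. by rewrite /af /incident; case: ifP; rewrite eqxx ?orbT. Qed.

Let afA : af \in A.
Proof. by rewrite /af; case: ifP => // /negbT; have := bipA f; do 2 case: (_ \in A). Qed.

Let tfA : tf \notin A.
Proof. by rewrite /tf (bipartition_other bipA af_f) afA. Qed.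

(* Hall's relation on [A :\ af]: a system of distinct representatives for it,
   together with [f], is a perfect matching of [H] avoiding [e]. *)
Definition matchable a t :=
  [&& t \notin A, t != tf & [exists g, [&& g != e, incident a g & other a g == t]]].

Lemma pm_of_matchable : sdr matchable (A :\ af) ->
  exists N, [/\ perfect_matching N, f \in N & e \notin N].
Proof.
case=> phi phi_inj phiP.
pose ga a := odflt f [pick g | [&& g != e, incident a g & other a g == phi a]].
have gaP a : a \in A :\ af -> [&& ga a != e, incident a (ga a) & other a (ga a) == phi a].
  move=> aA; rewrite /ga; case: pickP => //= nopick.
  by case/and3P: (phiP a aA) => _ _ /existsP [g]; rewrite nopick.
have phiA a : a \in A :\ af -> phi a \in ~: A :\ tf.
  by move/phiP => /and3P [? ? _]; rewrite !inE andbC; apply/andP.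
have [N0 [pmN0 _]] : exists N, perfect_matching N /\ f \in N by case: mcH.
have bal := bipartition_balanced bipA llH pmN0.
have phi_onto : phi @: (A :\ af) = ~: A :\ tf.
  apply/eqP; rewrite eqEcard; apply/andP; split.
    by apply/subsetP => _ /imsetP [a aA ->]; apply: phiA.
  rewrite (card_in_imset phi_inj); have := cardsD1 tf (~: A); have := cardsD1 af A.
  by rewrite afA inE tfA; lia.
pose N := f |: [set ga a | a in A :\ af].
have covered g v : g \in N -> incident v g -> 0 < deg N v.
  by move=> gN vg; rewrite card_gt0; apply/set0Pn; exists g; rewrite inE gN vg.
have gaN a : a \in A :\ af -> ga a \in N by move=> aA; rewrite in_setU1 imset_f ?orbT.
exists N; split; last first.
- rewrite in_setU1 negb_or eq_sym fe; apply/imsetP => -[a aA ea].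
  by case/and3P: (gaP a aA); rewrite -ea eqxx.
- exact: setU11.
apply: perfect_matching_of_cover llH _ _ => [v|]; last first.
  have : #|[set ga a | a in A :\ af]| <= #|A :\ af| := leq_imset_card _ _.
  have := cardsD1 af A; have := cardsC A; have := leq_b1 (f \notin [set ga a | a in A :\ af]).
  by rewrite (cardsU1 f) afA /=; lia.
have [vA|vA] := boolP (v \in A).
  have [->|vaf] := eqVneq v af; first exact: covered (setU11 _ _) af_f.
  have vA' : v \in A :\ af by rewrite !inE vaf.
  by case/and3P: (gaP v vA') => _ vg _; apply: covered (gaN v vA') vg.
have [->|vtf] := eqVneq v tf; first exact: covered (setU11 _ _) (incident_other af_f).
have /imsetP [a aA ->] : v \in phi @: (A :\ af) by rewrite phi_onto !inE vtf vA.
case/and3P: (gaP a aA) => _ ag /eqP <-.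
exact: covered (gaN a aA) (incident_other ag).
Qed.

Lemma matchable_other (S0 : {set gV H}) s g : s \in S0 -> s \in A -> g != e -> incident s g ->
  other s g \in tf |: nbhd_rel matchable S0.
Proof.
move=> sS0 sA ge sg; rewrite in_setU1; case: eqVneq => //= otf.
rewrite inE; apply/exists_inP; exists s; rewrite // /matchable (bipartition_other bipA sg) sA /=.
by rewrite otf; apply/existsP; exists g; rewrite ge sg eqxx.
Qed.

(* By the surplus of [S0] in [H], its neighbourhood exceeds [T] (which has at
   most [#|S0|] elements); the only neighbour of [S0] outside [T] can be the other
   end of [e], reached from [x]. *)
Lemma obstruction_of_deficient (S0 : {set gV H}) : S0 \subset A :\ af ->
  #|nbhd_rel matchable S0| < #|S0| -> obstruction S0 (tf |: nbhd_rel matchable S0).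
Proof.
rewrite subsetD1 => /andP [S0A afS0] deficient; set T := tf |: _.
have nzS0 : S0 != set0 by apply: contraTneq deficient => ->; rewrite cards0.
have neS0A : S0 != A by apply: contraNneq afS0 => ->.
have surplus := matching_covered_surplus mcH bipA S0A nzS0 neS0A.
have cardT : #|T| = #|nbhd_rel matchable S0| + 1.
  suff tfR : tf \notin nbhd_rel matchable S0 by rewrite /T cardsU1 tfR addnC.
  by rewrite inE; apply/exists_inP => -[s _ /and3P [_ /eqP]].
have nbhdS0 t : t \in nbhd S0 -> t \in T \/ t = other x e /\ x \in S0.
  rewrite inE => /exists_inP [s sS0 /adjP [g sg <-]].
  have sA := subsetP S0A s sS0.
  case: (eqVneq g e) => [gE|ge]; last by left; apply: matchable_other.
  rewrite gE in sg *; right; case: (incident_otherP xe sg) => sx; first by rewrite -sx.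
  by move: sA; rewrite sx (bipartition_other bipA xe) xA.
have [xS0 beT] : x \in S0 /\ other x e \notin T.
  apply/andP; apply: contraLR surplus; rewrite negb_and negbK -leqNgt => xbeT.
  suff /subset_leq_card : nbhd S0 \subset T by lia.
  by apply/subsetP => t /nbhdS0 [//|[-> xS0]]; move: xbeT; rewrite xS0.
have : nbhd S0 \subset other x e |: T.
  by apply/subsetP => t /nbhdS0 [tT|[-> _]]; rewrite in_setU1 ?tT ?orbT ?eqxx.
move/subset_leq_card; rewrite cardsU1 beT => le_nbhd.
split => //; last by move=> g ge s sS0; apply: matchable_other => //; apply: (subsetP S0A).
  apply/subsetP => t tT; rewrite in_setD1 in_setC (contraNneq _ beT) => [|<- //].
  move: tT; rewrite in_setU1 => /orP [/eqP ->|]; rewrite ?tfA //.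
  by rewrite inE => /exists_inP [s _ /and3P []].
by lia.
Qed.

Lemma obstruction_of_dependent :
  (forall N, perfect_matching N -> f \in N -> e \in N) -> exists S T, obstruction S T.
Proof.
move=> dep; case: (boolP [forall S0 : {set gV H},
                          (S0 \subset A :\ af) ==> (#|S0| <= #|nbhd_rel matchable S0|)]).
  move/forallP => hallA; have /pm_of_matchable [N [pmN fN]] : sdr matchable (A :\ af).
    by apply: (hall af) => S0; apply/implyP.
  by rewrite (dep N pmN fN).
case/forallPn => S0; rewrite negb_imply -ltnNge => /andP [sS0 deficient].
by exists S0, (tf |: nbhd_rel matchable S0); apply: obstruction_of_deficient.
Qed.

End Dependent.

Lemma removable_of_no_obstruction :
  (exists f, f != e) -> (forall S T, ~ obstruction S T) -> removable e.
Proof.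
move=> ex_f no_obs; apply: removable_of_avoiding => // f fe.
case: (boolP [exists N : {set gE H}, [&& [forall v, #|[set g in N | incident v g]| == 1],
                            f \in N & e \notin N]]).
  by case/existsP => N /and3P [/perfect_matchingP pmN fN eN]; exists N.
move/existsPn => noN; have [|S [T /no_obs []]] := obstruction_of_dependent fe.
move=> N /perfect_matchingP pmN fN; apply: contraT => eN.
by have := noN N; rewrite pmN fN eN.
Qed.

End Obstruction.

Lemma inside_setU_cut (G : mgraph) (A S T : {set gV G}) h : bipartition A ->
  S \subset A -> T \subset ~: A -> h \in inside (S :|: T) -> (h \in cut S) && (h \in cut T).
Proof.
move=> bipA SA TA; rewrite [h \in inside _]inE => /andP [sST tST].
have memS v : v \in S :|: T -> (v \in S) = (v \in A).
  move=> vST; apply/idP/idP => [/(subsetP SA) //|vA].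
  by case/setUP: vST => // /(subsetP TA); rewrite inE vA.
have memT v : v \in S :|: T -> (v \in T) = (v \notin A).
  move=> vST; apply/idP/idP => [/(subsetP TA)|vA]; first by rewrite inE.
  by case/setUP: vST => // /(subsetP SA); rewrite (negbTE vA).
by rewrite !inE !memS ?memT //; have := bipA h; do 2 case: (_ \in A).
Qed.

Section Counting.
Variables (H : mgraph) (A : {set gV H}) (e : gE H) (x y : gV H) (F : {set gE H}).
Hypotheses (llH : loopless H) (bipA : bipartition A) (balA : #|A| = #|~: A|).
Hypotheses (xA : x \in A) (xy : x != y).
Hypothesis degF : forall w, w != x -> w != y -> deg F w = 1.

Lemma sum_deg_avoiding (P : {set gV H}) : x \notin P -> y \notin P -> \sum_(v in P) deg F v = #|P|.
Proof.
move=> xP yP; rewrite -sum1_card; apply: eq_bigr => v vP.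
by apply: degF; [apply: contraNneq xP | apply: contraNneq yP] => <-.
Qed.

Lemma deg_same_side : y \in A -> deg F x + deg F y = 2.
Proof.
move=> yA; have := sum_deg_bipartition bipA F llH.
rewrite -(sum_deg_bipartition (bipartitionC bipA) F llH).
rewrite (sum_deg_avoiding (P := ~: A)) ?inE ?xA ?yA //.
rewrite (big_setD1 x xA) (big_setD1 y) /=; last by rewrite !inE eq_sym xy.
rewrite sum_deg_avoiding ?inE ?eqxx ?andbF //.
by have := cardsD1 x A; have := cardsD1 y (A :\ x); rewrite xA !inE eq_sym xy yA /=; lia.
Qed.

Lemma deg_opposite_sides : y \notin A -> deg F x = deg F y.
Proof.
move=> yA; have yA' : y \in ~: A by rewrite inE.
have := sum_deg_bipartition bipA F llH.
rewrite -(sum_deg_bipartition (bipartitionC bipA) F llH) (big_setD1 x xA) (big_setD1 y yA') /=.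
rewrite !sum_deg_avoiding ?inE ?eqxx ?andbF ?xA ?(negbTE yA) ?andbF //.
by have := cardsD1 x A; have := cardsD1 y (~: A); rewrite xA yA' /=; lia.
Qed.

Section AtObstruction.
Variables S T : {set gV H}.
Hypotheses (xe : incident x e) (obsST : obstruction A e x S T).

Let SA : S \subset A. Proof. by case: obsST. Qed.
Let TA : T \subset ~: A. Proof. by case: obsST => _ _ /subset_trans -> //; apply: subsetDl. Qed.
Let xS : x \in S. Proof. by case: obsST. Qed.

(* Every edge leaving [S] either is [e] or ends in [T]. *)
Lemma card_cut_obstruction : #|F :&: cut S| = #|F :&: inside (S :|: T)| + (e \in F).
Proof.
have [_ _ _ _ ST] := obsST; have beST := obstruction_other bipA xA xe obsST.
have beS : other x e \notin S by apply: contra beST; rewrite inE => ->.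
have eST : e \notin inside (S :|: T) by rewrite (inside_other _ xe) (negbTE beST) andbF.
have -> : F :&: cut S = (F :&: inside (S :|: T)) :|: (F :&: [set e]).
  apply/setP => g; rewrite in_setU !in_setI in_set1; case: (g \in F) => //=.
  apply/idP/idP => [/cut_end [s [sg sS _]]|]; last first.
    case/orP => [/(inside_setU_cut bipA SA TA) /andP [] //|/eqP ->].
    by rewrite (cut_other _ xe) xS (negbTE beS).
  case: (eqVneq g e) => [_|ge]; rewrite ?orbT // orbF (inside_other _ sg) in_setU sS.
  by rewrite in_setU (ST g ge s sS sg) orbT.
rewrite cardsU cards_setI1; have -> : F :&: inside (S :|: T) :&: (F :&: [set e]) = set0.
  apply/setP => g; rewrite !in_setI in_set1 in_set0.
  by case: (eqVneq g e) => [->|]; rewrite ?(negbTE eST) ?andbF.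
by rewrite cards0 subn0.
Qed.

Lemma card_inside_obstruction : #|F :&: inside (S :|: T)| <= #|F :&: cut T|.
Proof.
apply/subset_leq_card/subsetP => g; rewrite !in_setI => /andP [-> /=].
by case/(inside_setU_cut bipA SA TA)/andP.
Qed.

Lemma deg_obstruction : y \notin A -> y \notin T -> deg F x <= 2.
Proof.
move=> yA yT; have [_ _ _ cardST _] := obsST; have yS : y \notin S := contra (subsetP SA _) yA.
have xT : x \notin T by apply: contraL xA => /(subsetP TA); rewrite inE.
have sumS := sum_deg_side bipA F llH SA.
rewrite (big_setD1 x xS) /= sum_deg_avoiding ?inE ?eqxx ?(negbTE yS) ?andbF // in sumS.
have sumT := sum_deg_side (bipartitionC bipA) F llH TA.
rewrite (sum_deg_avoiding xT yT) in sumT.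
have := card_cut_obstruction; have := card_inside_obstruction; have := cardsD1 x S.
by rewrite xS /=; have := leq_b1 (e \in F); lia.
Qed.

Lemma cut_obstruction : y \in T -> #|F :&: cut (S :|: T)| = 2 * (e \in F).
Proof.
move=> yT; have [_ _ _ cardST _] := obsST.
have yA : y \notin A by have := subsetP TA y yT; rewrite inE.
have yS : y \notin S := contra (subsetP SA _) yA.
have xT : x \notin T by apply: contraL xA => /(subsetP TA); rewrite inE.
have disjST : [disjoint S & T].
  by rewrite disjoint_sym disjoints_subset (subset_trans TA) // setCS.
have sumST : \sum_(v in S :|: T) deg F v = \sum_(v in S) deg F v + \sum_(v in T) deg F v.
  by rewrite -bigU //; apply: eq_bigl => v; rewrite !inE.
have sumS := sum_deg_side bipA F llH SA.
rewrite (big_setD1 x xS) /= sum_deg_avoiding ?inE ?eqxx ?(negbTE yS) ?andbF // in sumS.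
have sumT := sum_deg_side (bipartitionC bipA) F llH TA.
rewrite (big_setD1 y yT) /= sum_deg_avoiding ?inE ?eqxx ?(negbTE xT) ?andbF // in sumT.
rewrite sum_deg // (sum_deg_side bipA F llH SA) in sumST.
rewrite (sum_deg_side (bipartitionC bipA) F llH TA) in sumST.
have := deg_opposite_sides yA; have := card_cut_obstruction.
by have := cardsD1 x S; have := cardsD1 y T; rewrite xS yT /=; lia.
Qed.

End AtObstruction.

End Counting.

Section ContractionMap.
Variables (G : mgraph) (Z : {set gV G}).

Lemma cmap_eq_None v : (cmap Z v == None) = (v \in Z).
Proof. by rewrite /cmap; case: insubP => [u /negbTE -> _|/negbNE ->]. Qed.

Lemma cmap_notin v (vZ : v \notin Z) : cmap Z v = Some (Sub v vZ).
Proof. by rewrite /cmap insubT. Qed.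

Lemma cmap_Some v u : cmap Z v = Some u -> val u = v.
Proof. by rewrite /cmap; case: insubP => [u' _ <- [<-]|]. Qed.

Lemma card_contract : #|gV (contract Z)| = #|~: Z|.+1.
Proof. by rewrite card_option card_sig; congr _.+1; apply: eq_card => v; rewrite !inE. Qed.

End ContractionMap.

Section DoubleContraction.
Variables (G : mgraph) (X Y : {set gV G}).
Hypothesis disjXY : [disjoint ~: X & ~: Y].
Let G1 := contract (~: X).
Let Ybar1 : {set gV G1} := [set cmap (~: X) y | y in ~: Y].
Let H := contract Ybar1.
Let xbar : gV H := cmap Ybar1 (cvtx (~: X)).
Let ybar : gV H := cvtx Ybar1.

Definition proj (v : gV G) : gV H := cmap Ybar1 (cmap (~: X) v).

Definition orig (g : gE H) : gE G := val (val g).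

Lemma notinY_inX v : v \in ~: Y -> v \in X.
Proof.
move=> vY; apply: contraT => vX; have /setP/(_ v) := disjoint_setI0 disjXY.
by rewrite in_setI vY in_setC vX in_set0.
Qed.

Lemma cmap_in_Ybar1 v : (cmap (~: X) v \in Ybar1) = (v \in ~: Y).
Proof.
apply/imsetP/idP => [[w wY]|vY]; last by exists v.
have wX : w \notin ~: X by rewrite inE negbK notinY_inX.
by rewrite (cmap_notin wX) => /cmap_Some /= <-.
Qed.

Lemma cvtx_notin_Ybar1 : cvtx (~: X) \notin Ybar1.
Proof. by apply/imsetP => -[w /notinY_inX wX]; rewrite cmap_notin ?inE ?negbK. Qed.

Lemma proj_eq_ybar v : (proj v == ybar) = (v \in ~: Y).
Proof. by rewrite /proj /ybar /cvtx cmap_eq_None cmap_in_Ybar1. Qed.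

Lemma proj_eq_xbar v : (proj v == xbar) = (v \in ~: X).
Proof.
rewrite /proj /xbar (cmap_notin cvtx_notin_Ybar1) -cmap_eq_None.
case: (cmap (~: X) v) => [u|] /=; last by rewrite (cmap_notin cvtx_notin_Ybar1).
by case E : (cmap Ybar1 (Some u)) => [w|] //; apply/eqP => -[wE]; have := cmap_Some E; rewrite wE.
Qed.

Lemma xbar_neq_ybar : xbar != ybar.
Proof. by rewrite /xbar /ybar /cvtx (cmap_notin cvtx_notin_Ybar1). Qed.

Lemma proj_inj v w : v \in X -> v \in Y -> proj v = proj w -> v = w.
Proof.
move=> vX vY; have vX' : v \notin ~: X by rewrite inE negbK.
have vY1 : Some (Sub v vX') \notin Ybar1 by rewrite -(cmap_notin vX') cmap_in_Ybar1 inE negbK.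
by rewrite /proj (cmap_notin vX') (cmap_notin vY1) => /esym /cmap_Some /= /esym /cmap_Some.
Qed.

Lemma proj_onto (w : gV H) : w != xbar -> w != ybar -> exists v, [/\ v \in X, v \in Y & w = proj v].
Proof.
case: w => [[[u|] uY]|] wx wy; last by case/eqP: wy.
  have uX : val u \in X by have := valP u; rewrite inE negbK.
  have cu : cmap (~: X) (val u) = Some u by rewrite /cmap valK.
  have uY' : val u \in Y.
    by have := cmap_in_Ybar1 (val u); rewrite cu (negbTE uY) inE => /esym /negbFE.
  by exists (val u); split => //; rewrite /proj cu (cmap_notin uY).
by case/eqP: wx; rewrite /xbar /cvtx (cmap_notin cvtx_notin_Ybar1); congr Some; apply: val_inj.
Qed.

Lemma orig_inj : injective orig.
Proof. by move=> g1 g2 /val_inj /val_inj. Qed.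

Lemma esrc_orig g : esrc g = proj (esrc (orig g)). Proof. by []. Qed.
Lemma etgt_orig g : etgt g = proj (etgt (orig g)). Proof. by []. Qed.

Lemma origP h : ~~ ((esrc h \in ~: X) && (etgt h \in ~: X)) ->
  ~~ ((esrc h \in ~: Y) && (etgt h \in ~: Y)) -> exists g, orig g = h.
Proof.
move=> hX; rewrite -!cmap_in_Ybar1 => hY.
by exists (Sub (Sub h hX : gE G1) hY : gE H).
Qed.

Lemma orig_proj_neq h : proj (esrc h) != proj (etgt h) -> exists g, orig g = h.
Proof.
move=> neq; apply: origP; apply: contra neq;
  by rewrite -?proj_eq_xbar -?proj_eq_ybar => /andP [/eqP -> /eqP ->].
Qed.

Lemma orig_incident_XY h v : v \in X -> v \in Y -> incident v h -> exists g, orig g = h.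
Proof.
move=> vX vY vh; apply: origP; rewrite !inE negb_and !negbK;
  by case/orP: vh => /eqP ->; rewrite ?vX ?vY ?orbT.
Qed.

Lemma card_cut_proj (M : {set gE G}) (P : {set gV H}) :
  #|M :&: cut (proj @^-1: P)| = #|orig @^-1: M :&: cut P|.
Proof.
rewrite -(card_imset _ orig_inj); apply: eq_card => h; rewrite !inE.
apply/andP/imsetP => [[hM hcut]|[g /[!inE] /andP [gM gcut] ->]] //.
have [g gh] : exists g, orig g = h by apply: orig_proj_neq; apply: contra hcut => /eqP ->.
by exists g; rewrite // !inE gh hM esrc_orig etgt_orig gh.
Qed.

Lemma deg_proj (M : {set gE G}) v : v \in X -> v \in Y ->
  deg (orig @^-1: M) (proj v) = deg M v.
Proof.
move=> vX vY; rewrite /deg -(card_imset _ orig_inj); apply: eq_card => h.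
have proj_eq w : (proj w == proj v) = (w == v) by apply/eqP/eqP => [/esym /(proj_inj vX vY) ->|->].
rewrite !inE; apply/imsetP/andP => [[g /[!inE] /andP [gM]]|[hM vh]].
  by rewrite /incident esrc_orig etgt_orig !proj_eq => vg ->.
have [g gh] := orig_incident_XY vX vY vh.
by exists g; rewrite // !inE gh hM /incident esrc_orig etgt_orig gh !proj_eq.
Qed.

End DoubleContraction.

Arguments orig {G X Y}.

Section Bricks.
Variable G : mgraph.
Implicit Types (X Q : {set gV G}) (M : {set gE G}).

Lemma matching_covered_pm : matching_covered G -> exists M, perfect_matching M.
Proof.
case=> _ conn /card_gt1P [v [w [_ _ vw]]] cov.
have /connectP [[|v' p] /= path_p wE] := conn v w; first by rewrite wE eqxx in vw.
case/andP: path_p => /existsP [h _] _; have [M [pmM _]] := cov h; by exists M.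
Qed.

Lemma brick_cut_gt2 X : brick G -> 1 < #|X| -> 1 < #|~: X| -> odd #|X| ->
  exists2 M, perfect_matching M & 2 < #|M :&: cut X|.
Proof.
move=> [[ll _ _ _] _ nontight] ltX ltCX oddX.
case: (boolP [exists M : {set gE G}, [forall v, #|[set h in M | incident v h]| == 1] &&
                                   (2 < #|M :&: cut X|)]).
  by case/existsP => M /andP [/perfect_matchingP pmM lt2]; exists M.
move/existsPn => small; have : tight_cut X.
  move=> M pmM; have := odd_cut pmM X ll; rewrite oddX.
  have : #|M :&: cut X| <= 2.
    by have := small M; rewrite (introT (perfect_matchingP M) pmM) /= -leqNgt.
  by case: #|_| => [|[|[|]]].
by case/nontight => E; rewrite E in ltX ltCX.
Qed.

Lemma odd_card_pm M : loopless G -> perfect_matching M -> ~~ odd #|gV G|.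
Proof.
move=> ll pmM; rewrite -cardsT -(odd_cut pmM setT ll).
by rewrite (_ : _ :&: _ = set0) ?cards0 //; apply/setP => h; rewrite !inE andbF.
Qed.

(* Adding to [Q] a vertex [u] whose only edge into [Q] is [h] turns the
   cut parity [2 * (h \in M)] into [1]. *)
Lemma tight_cut_setU1 u Q h : loopless G -> u \notin Q -> incident u h -> other u h \in Q ->
  (forall g, incident u g -> other u g \in Q -> g = h) ->
  (forall M, perfect_matching M -> #|M :&: cut Q| = 2 * (h \in M)) ->
  tight_cut (u |: Q).
Proof.
move=> ll uQ uh ohQ uniq_h cutQ M pmM.
have insideR : M :&: inside (u |: Q) = (M :&: inside Q) :|: (M :&: [set h]).
  apply/setP => g; rewrite in_setU !in_setI in_set1; case: (g \in M) => //=.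
  apply/idP/orP => [|[|/eqP ->]]; last by rewrite (inside_other _ uh) !in_setU1 eqxx ohQ orbT.
    rewrite [g \in inside _]inE !in_setU1 => /andP [/orP [/eqP su|sQ] /orP [/eqP tu|tQ]].
    - by have := ll g; rewrite su tu eqxx.
    - right; apply/eqP; apply: uniq_h; first by rewrite /incident su eqxx.
      by rewrite /other su eqxx.
    - right; apply/eqP; apply: uniq_h; first by rewrite /incident tu eqxx orbT.
      by rewrite /other; case: eqP => [E|_] //; rewrite -E sQ in uQ.
    - by left; rewrite inE sQ tQ.
  by rewrite !inE => /andP [sQ tQ]; rewrite sQ tQ !orbT.
have hQ : h \notin inside Q by rewrite (inside_other _ uh) (negbTE uQ).
have disj : M :&: inside Q :&: (M :&: [set h]) = set0.
  apply/setP => g; rewrite !in_setI in_set1 in_set0.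
  by case: (eqVneq g h) => [->|]; rewrite ?(negbTE hQ) ?andbF.
have := card_pm pmM (u |: Q) ll; have := card_pm pmM Q ll.
rewrite cardsU1 uQ insideR cardsU disj cards0 subn0 cards_setI1 cutQ //.
by have := leq_b1 (h \in M); lia.
Qed.

End Bricks.

(* If only one vertex [z] survives, every edge of [G/Z] joins [z] to the
   contraction vertex, so [G/Z] is bipartite. *)
Lemma brick_contract_size (G : mgraph) (Z : {set gV G}) : loopless G -> brick (contract Z) ->
  1 < #|~: Z| /\ odd #|~: Z|.
Proof.
move=> llG [mcC nbip _]; have [llC _ two _] := mcC; have [M pmM] := matching_covered_pm mcC.
have := odd_card_pm llC pmM; rewrite card_contract /= negbK => oddZ.
split => //; move: two; rewrite card_contract ltnS leq_eqVlt => /orP [/eqP Z1|//].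
have /cards1P [z Ez] : #|~: Z| == 1 by rewrite -Z1.
case: nbip; exists [set cvtx Z] => h; have := valP h; rewrite !inE /= !cmap_eq_None.
have := llG (val h).
case: (boolP (esrc (val h) \in Z)) => sZ; case: (boolP (etgt (val h) \in Z)) => tZ //=.
by move: sZ tZ; rewrite -!in_setC Ez !inE => /eqP -> /eqP ->; rewrite eqxx.
Qed.

Section Reduction.
Variables (G : mgraph) (X Y : {set gV G}).
Hypothesis disjXY : [disjoint ~: X & ~: Y].
Let G1 := contract (~: X).
Let Ybar1 : {set gV G1} := [set cmap (~: X) y | y in ~: Y].
Let H := contract Ybar1.
Let xbar : gV H := cmap Ybar1 (cvtx (~: X)).
Let ybar : gV H := cvtx Ybar1.
Hypothesis llH : loopless H.

Lemma deg_xbar (M : {set gE G}) : deg (orig @^-1: M) xbar = #|M :&: cut (~: X)|.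
Proof.
rewrite deg_cut1 // -(card_cut_proj disjXY).
suff -> : proj X Y @^-1: [set xbar] = ~: X by [].
by apply/setP => v; rewrite inE in_set1 proj_eq_xbar.
Qed.

Lemma deg_orig_pm (M : {set gE G}) : perfect_matching M ->
  forall w, w != xbar -> w != ybar -> deg (orig @^-1: M) w = 1.
Proof.
move=> pmM w wx wy; have [v [vX vY ->]] := proj_onto disjXY wx wy.
by rewrite (deg_proj disjXY) //; apply: pmM.
Qed.

Lemma incident_proj u (g : gE H) : incident u (orig g) ->
  incident (proj X Y u) g /\ other (proj X Y u) g = proj X Y (other u (orig g)).
Proof.
case/incident_ends => [] [s t].
  have sg : esrc g = proj X Y u by rewrite esrc_orig s.
  by rewrite /incident {1}/other sg !eqxx etgt_orig t.
have tg : etgt g = proj X Y u by rewrite etgt_orig s.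
have sg : esrc g = proj X Y (other u (orig g)) by rewrite esrc_orig t.
rewrite /incident {1}/other tg eqxx orbT; split => //.
by case: eqP => // E; have := llH g; rewrite E tg eqxx.
Qed.

Section TightCut.
Variables (A : {set gV H}) (e : gE H) (S T : {set gV H}).
Hypotheses (llG : loopless G) (bipA : bipartition A) (balA : #|A| = #|~: A|).
Hypotheses (xA : xbar \in A) (xe : incident xbar e).
Hypotheses (obsST : obstruction A e xbar S T) (yT : ybar \in T).

(* The preimage [Q] of the vertices outside [S :|: T] lies in [X :&: Y]; the
   end [u] of [e] in [~: X] has [e] as its only edge into [Q], and every perfect
   matching of [G] meets the cut of [Q] in [0] or [2] edges. *)
Lemma obstruction_tight_cut : 1 < #|~: Y| ->
  exists R : {set gV G}, [/\ tight_cut R, 1 < #|R| & 1 < #|~: R|].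
Proof.
move=> ltY; have [xS _ _ _ obs_edges] := obsST.
have [u [ue ux]] : exists u, incident u (orig e) /\ proj X Y u = xbar.
  by case/orP: xe => /eqP <-; [exists (esrc (orig e))|exists (etgt (orig e))];
    rewrite /incident eqxx ?orbT.
pose Q := proj X Y @^-1: ~: (S :|: T).
have uQ : u \notin Q by rewrite !inE ux xS.
have bQ : other u (orig e) \in Q.
  rewrite inE; have [_ <-] := incident_proj ue.
  by rewrite ux in_setC (obstruction_other bipA xA xe obsST).
have Q_XY v : v \in Q -> v \in X /\ v \in Y.
  rewrite !inE negb_or => /andP [vS vT]; split; apply: contraT => vXY.
    have /eqP vx : proj X Y v == xbar by rewrite (proj_eq_xbar disjXY) inE.
    by rewrite vx xS in vS.
  have /eqP vy : proj X Y v == ybar by rewrite (proj_eq_ybar disjXY) inE.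
  by rewrite vy yT in vT.
have only_e g' : incident u g' -> other u g' \in Q -> g' = orig e.
  move=> ug' oQ; have [wX wY] := Q_XY _ oQ.
  have [g gE] := orig_incident_XY disjXY wX wY (incident_other ug'); subst g'.
  have [xg og] := incident_proj ug'; rewrite ux in xg og.
  case: (eqVneq g e) => [-> //|ge]; have := obs_edges g ge _ xS xg.
  by move: oQ; rewrite og !inE negb_or => /andP [_ /negbTE ->].
have cutQ M : perfect_matching M -> #|M :&: cut Q| = 2 * (orig e \in M).
  move=> pmM; rewrite (card_cut_proj disjXY) cutC.
  have degM := deg_orig_pm pmM.
  by rewrite (cut_obstruction llH bipA balA xA (xbar_neq_ybar disjXY) degM xe obsST yT) inE.
exists (u |: Q); split; first exact: tight_cut_setU1 llG uQ ue bQ only_e cutQ.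
  apply/card_gt1P; exists u, (other u (orig e)); rewrite !in_setU1 eqxx bQ orbT.
  by split => //; apply: contraNneq uQ => ->.
apply: leq_trans ltY (subset_leq_card _); apply/subsetP => v vY.
rewrite !inE negb_or; apply/andP; split.
  apply: contraTneq vY => ->; apply/negP => /(notinY_inX disjXY).
  by apply/negP; rewrite -in_setC -(proj_eq_xbar disjXY) ux.
have /eqP -> : proj X Y v == ybar by rewrite (proj_eq_ybar disjXY).
by rewrite negbK yT orbT.
Qed.

End TightCut.
End Reduction.

Theorem mainTheorem12 (G : mgraph) (X Y : {set gV G}) :
  brick G ->
  ~: X != set0 -> ~: Y != set0 -> [disjoint ~: X & ~: Y] ->
  brick (contract X) -> brick (contract Y) ->
  let G1 := contract (~: X) in
  let Ybar1 : {set gV G1} := [set cmap (~: X) y | y in ~: Y] in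
  let H := contract Ybar1 in
  let xbar : gV H := cmap Ybar1 (cvtx (~: X)) in
  bipartite H -> matching_covered H ->
  forall e : gE H, incident xbar e -> removable e.
Proof.
move=> bG _ _ disjXY bX bY G1 Ybar1 H xbar [A0 bipA0] mcH e xe.
have [[[llG _ _ _] _ nontight] [llH _ _ _]] := (bG, mcH).
have [A bipA xA] : exists2 A, bipartition A & xbar \in A.
  case: (boolP (xbar \in A0)) => xA0; first by exists A0.
  by exists (~: A0); rewrite ?inE //; apply: bipartitionC.
have [M0 pmM0] := matching_covered_pm mcH; have balA := bipartition_balanced bipA llH pmM0.
have [ltX oddX] := brick_contract_size llG bX; have [ltY _] := brick_contract_size llG bY.
have ltCX : 1 < #|~: ~: X|.
  by rewrite setCK; apply: leq_trans ltY (subset_leq_card _); apply/subsetP => v; apply: notinY_inX.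
have [M pmM cut_gt2] := brick_cut_gt2 bG ltX ltCX oddX.
have deg_gt2 : 2 < @deg H (orig @^-1: M) xbar by rewrite (deg_xbar disjXY llH).
have degF : forall w, w != xbar -> w != cvtx Ybar1 -> deg (orig @^-1: M) w = 1.
  by move=> w; apply: (deg_orig_pm disjXY pmM).
have xy : xbar != cvtx Ybar1 := xbar_neq_ybar disjXY.
apply: (removable_of_no_obstruction mcH bipA xA xe) => [|S T obsST].
  have /card_gt1P [g1 [g2 [_ _ g12]]] := ltnW deg_gt2.
  by case: (eqVneq g1 e) => [E|]; [exists g2; rewrite -E eq_sym | exists g1].
case: (boolP (cvtx Ybar1 \in A)) => [yA|yA].
  by have := deg_same_side llH bipA balA xA xy degF yA; lia.
case: (boolP (cvtx Ybar1 \in T)) => [yT|yT]; last first.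
  by have := deg_obstruction llH bipA balA xA xy degF xe obsST yA yT; lia.
have [R [tightR ltR ltCR]] := obstruction_tight_cut disjXY llH llG bipA balA xA xe obsST yT ltY.
by case: (nontight R tightR) => E; rewrite E in ltR ltCR.
Qed.
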